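(* Let $I$ be an index set and $(X_i)_{i\in I}$ topological spaces. Then $\prod_{i\in I}X_i$ is a Baire space if and only if $\prod_{i\in I}\mathcal K(X_i)$ is a Baire space (both with the product topology).
   Context: A topological space is a Baire space if every countable intersection of dense open subsets is dense. Krom space: for a space $X$ with topology $\tau$, let $\downarrow\tau^{\omega}$ be the set of sequences $f=(f(0),f(1),\dots)$ of nonempty open subsets of $X$ with $f(k+1)\subseteq f(k)$ for all $k$, and for $n\ge1$ let $\downarrow\tau^{n}$ be the set of such decreasing finite sequences of length $n$. $\mathcal K(X)=\{f\in\downarrow\tau^{\omega}:\bigcap_n f(n)\neq\emptyset\}$, topologized as a subspace of $\tau^{\omega}$ where $\tau$ carries the discrete topology; a base consists of the sets $[h]=\{g\in\mathcal K(X): g(k)=h(k)\text{ for all }k<n\}$ for $h\in\downarrow\tau^{n}$, $n\ge1$. *)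

From Stdlib Require Import List.

Record TopSpace := {
  carrier :> Type;
  is_open : (carrier -> Prop) -> Prop;
  open_setT : is_open (fun _ => True);
  open_setI : forall U V, is_open U -> is_open V -> is_open (fun x => U x /\ V x);
  open_bigU : forall F : (carrier -> Prop) -> Prop,
      (forall U, F U -> is_open U) -> is_open (fun x => exists U, F U /\ U x)
}.

Definition dense {T : Type} (op : (T -> Prop) -> Prop) (D : T -> Prop) : Prop :=
  forall U, op U -> (exists x, U x) -> exists x, U x /\ D x.

Definition baire (T : Type) (op : (T -> Prop) -> Prop) : Prop :=
  forall D : nat -> T -> Prop,
    (forall n, op (D n) /\ dense op (D n)) ->
    dense op (fun x => forall n, D n x).

Definition prod_open {I : Type} (T : I -> Type)
    (op : forall i, (T i -> Prop) -> Prop) (U : (forall i, T i) -> Prop) : Prop :=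
  forall x, U x -> exists (l : list I) (V : forall i, T i -> Prop),
    (forall i, In i l -> op i (V i)) /\
    (forall i, In i l -> V i (x i)) /\
    (forall y, (forall i, In i l -> V i (y i)) -> U y).

Definition krom_seq (X : TopSpace) (f : nat -> X -> Prop) : Prop :=
  (forall n, is_open X (f n) /\ exists x, f n x) /\
  (forall k x, f (S k) x -> f k x) /\
  (exists x, forall n, f n x).

Definition Krom (X : TopSpace) : Type := { f : nat -> X -> Prop | krom_seq X f }.

(* Topology of K(X) as a subspace of tau^omega, tau discrete: U is open iff
   every g in U has a basic neighbourhood [g|(n+1)] (sequences agreeing with g
   on the first n+1 terms, equality of terms being equality of subsets of X)
   contained in U. *)
Definition krom_open (X : TopSpace) (U : Krom X -> Prop) : Prop :=
  forall g, U g -> exists n : nat, forall g' : Krom X,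
    (forall k, k <= n -> forall x, proj1_sig g' k x <-> proj1_sig g k x) -> U g'.

From Stdlib Require Import List Lia.
From Stdlib Require Import Classical ClassicalEpsilon FunctionalExtensionality PropExtensionality.
From mathcomp Require classical_sets.

(* A basic open set of prod_i K(X_i) is a cylinder [g|N] over finitely many
   coordinates l; its shadow in prod_i X_i is the box of the N-th terms g_i(N),
   i in l.  Both directions compare the two products through shadows.

   If prod_i K(X_i) is Baire and D_n are dense open in prod_i X_i, the sets of
   g having some shadow inside D_n are dense open; a point lying in every term
   of every coordinate of a g in all of them lies in every D_n.

   If prod_i X_i is Baire and E_n are dense open in prod_i K(X_i), build levels
   of cylinders: level n+1 is a maximal family, with pairwise disjoint shadows,
   of cylinders inside E_n refining a cylinder of level n.  The union of the
   shadows of a level, together with the exterior of the starting shadow, is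
   dense open, so some x lies in all of them.  By disjointness x threads a
   single branch of refining cylinders of unbounded depth, whose coordinatewise
   limit lies in every E_n; its terms have nonempty intersection because they
   all contain x. *)

Definition kval {Y : TopSpace} (g : Krom Y) : nat -> Y -> Prop := proj1_sig g.

Lemma kval_open (Y : TopSpace) (g : Krom Y) k : is_open Y (kval g k).
Proof. exact (proj1 (proj1 (proj2_sig g) k)). Qed.

Lemma kval_nonempty (Y : TopSpace) (g : Krom Y) k : exists x, kval g k x.
Proof. exact (proj2 (proj1 (proj2_sig g) k)). Qed.

Lemma kval_decr (Y : TopSpace) (g : Krom Y) m n x : m <= n -> kval g n x -> kval g m x.
Proof.
  induction 1 as [|n _ IH]; [tauto|].
  intro Hx; apply IH; exact (proj1 (proj2 (proj2_sig g)) n x Hx).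
Qed.

Lemma kval_common_point (Y : TopSpace) (g : Krom Y) : exists x, forall n, kval g n x.
Proof. exact (proj2 (proj2 (proj2_sig g))). Qed.

Definition krom_top {Y : TopSpace} (y : Y) : Krom Y.
Proof.
  exists (fun _ _ => True); split; [|split].
  - intro n; split; [apply open_setT | exists y; exact I].
  - intros; exact I.
  - exists y; intros; exact I.
Defined.

Lemma open_imply (Y : TopSpace) (P : Prop) (U : Y -> Prop) :
  (P -> is_open Y U) -> is_open Y (fun z => P -> U z).
Proof.
  intro HU; destruct (classic P) as [p|np].
  - replace (fun z => P -> U z) with U; [exact (HU p)|].
    apply functional_extensionality; intro z; apply propositional_extensionality; tauto.
  - replace (fun z => P -> U z) with (fun _ : Y => True); [apply open_setT|].
    apply functional_extensionality; intro z; apply propositional_extensionality; tauto.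
Qed.

Definition agree_upto {Y : Type} (f g : nat -> Y -> Prop) (N : nat) : Prop :=
  forall k, k <= N -> forall x, f k x <-> g k x.

Lemma agree_upto_refl {Y} (f : nat -> Y -> Prop) N : agree_upto f f N.
Proof. intros k _ x; tauto. Qed.

Lemma agree_upto_trans {Y} (f g h : nat -> Y -> Prop) N :
  agree_upto f g N -> agree_upto g h N -> agree_upto f h N.
Proof. intros Hfg Hgh k Hk x; specialize (Hfg k Hk x); specialize (Hgh k Hk x); tauto. Qed.

Lemma agree_upto_le {Y} (f g : nat -> Y -> Prop) m n :
  m <= n -> agree_upto f g n -> agree_upto f g m.
Proof. intros Hmn H k Hk; apply H; lia. Qed.

(* The limit takes its k-th term from f k, which is already frozen up to N k >= k. *)
Lemma krom_limit (Y : TopSpace) (f : nat -> Krom Y) (N : nat -> nat) (y : Y) :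
  (forall n, n <= N n) ->
  (forall n m, n <= m -> agree_upto (kval (f m)) (kval (f n)) (N n)) ->
  (forall n, kval (f n) (N n) y) ->
  exists g : Krom Y, forall n, agree_upto (kval g) (kval (f n)) (N n).
Proof.
  intros HN Hagree Hy.
  assert (Hg : krom_seq Y (fun k => kval (f k) k)).
  { split; [|split].
    - intro k; split; [apply kval_open | apply kval_nonempty].
    - intros k z Hz.
      apply (Hagree k (S k) (le_S _ _ (le_n k)) k (HN k)).
      exact (kval_decr _ _ _ _ _ (le_S _ _ (le_n k)) Hz).
    - exists y; intro k; exact (kval_decr _ _ _ _ _ (HN k) (Hy k)). }
  exists (exist _ _ Hg); intros n k Hk z; unfold kval at 1; simpl.
  rewrite <- (Hagree k (Nat.max k n) ltac:(lia) k (HN k) z).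
  exact (Hagree n (Nat.max k n) ltac:(lia) k Hk z).
Qed.

Lemma list_common_bound {I : Type} (l : list I) (P : I -> nat -> Prop) :
  (forall i, In i l -> exists n, P i n) -> (forall i m n, m <= n -> P i m -> P i n) ->
  exists M, forall i, In i l -> P i M.
Proof.
  intros HP Hmono; induction l as [|a l IH].
  - exists 0; intros i [].
  - destruct IH as [M HM]; [intros i Hi; apply HP; right; exact Hi|].
    destruct (HP a (or_introl eq_refl)) as [n Hn].
    exists (Nat.max M n); intros i [<-|Hi].
    + apply (Hmono _ n); [lia | exact Hn].
    + apply (Hmono _ M); [lia | apply HM; exact Hi].
Qed.

Lemma maximal_disjoint_meets {Q Y : Type} (B : Q -> Y -> Prop) (E D : Q -> Prop) :
  classical_sets.maximal_disjoint_subcollection B E D ->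
  forall q, D q -> (exists y, B q y) -> exists q', E q' /\ exists y, B q y /\ B q' y.
Proof.
  intros [HED Htriv Hmax] q Dq [y0 Hy0]; apply NNPP; intro Hmeet.
  assert (HqE : ~ E q) by (intro Eq; apply Hmeet; exists q; eauto).
  apply (Hmax (fun z => E z \/ z = q)).
  - split; [intros z Ez; left; exact Ez | intro Hsub; exact (HqE (Hsub q (or_intror eq_refl)))].
  - intros z [Ez | ->]; [exact (HED z Ez) | exact Dq].
  - intros i j Hi Hj [y [Bi Bj]].
    destruct Hi as [Ei | ->]; destruct Hj as [Ej | ->]; auto.
    + apply Htriv; auto; exists y; split; assumption.
    + exfalso; apply Hmeet; exists i; eauto.
    + exfalso; apply Hmeet; exists j; eauto.
Qed.

Section KromProduct.
Variable I : Type.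
Variable X : I -> TopSpace.

Local Notation PX := (forall i, carrier (X i)).
Local Notation opX := (prod_open (fun i => carrier (X i)) (fun i => is_open (X i))).
Local Notation PK := (forall i, Krom (X i)).
Local Notation opK := (prod_open (fun i => Krom (X i)) (fun i => krom_open (X i))).

Record cond := Cond { cfun : PK; csupp : list I; cdepth : nat }.

Definition cyl (q : cond) (h : PK) : Prop :=
  forall i, In i (csupp q) -> agree_upto (kval (h i)) (kval (cfun q i)) (cdepth q).

Definition shadow (q : cond) (y : PX) : Prop :=
  forall i, In i (csupp q) -> kval (cfun q i) (cdepth q) (y i).

Definition in_box (l : list I) (V : forall i, X i -> Prop) (y : PX) : Prop :=
  forall i, In i l -> V i (y i).

Definition open_box (l : list I) (V : forall i, X i -> Prop) : Prop :=
  forall i, In i l -> is_open (X i) (V i).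

Definition refines (q' q : cond) : Prop :=
  incl (csupp q) (csupp q') /\ cdepth q <= cdepth q' /\ cyl q (cfun q').

Lemma cyl_refl q : cyl q (cfun q).
Proof. intros i _; apply agree_upto_refl. Qed.

Lemma prod_krom_openP (U : PK -> Prop) :
  opK U <-> forall g, U g -> exists l N, forall h, cyl (Cond g l N) h -> U h.
Proof.
  split.
  - intros HU g Hg; destruct (HU g Hg) as [l [V [HVo [HgV HVU]]]].
    destruct (list_common_bound l
                (fun i n => forall h', agree_upto (kval h') (kval (g i)) n -> V i h'))
      as [M HM].
    + intros i Hi; destruct (HVo i Hi (g i) (HgV i Hi)) as [n Hn]; exists n; exact Hn.
    + intros i m n Hmn Hm h' Hh'; apply Hm; exact (agree_upto_le _ _ _ _ Hmn Hh').
    + exists l, M; intros h Hh; apply HVU; intros i Hi; apply (HM i Hi), Hh, Hi.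
  - intros H g Hg; destruct (H g Hg) as [l [N HN]].
    exists l, (fun i h' => agree_upto (kval h') (kval (g i)) N); split; [|split].
    + intros i _ h' Hh'; exists N; intros g' Hg'; exact (agree_upto_trans _ _ _ _ Hg' Hh').
    + intros i _; apply agree_upto_refl.
    + intros y Hy; apply HN; exact Hy.
Qed.

Lemma cyl_open q : opK (cyl q).
Proof.
  apply prod_krom_openP; intros h Hh; exists (csupp q), (cdepth q).
  intros h' Hh' i Hi; exact (agree_upto_trans _ _ _ _ (Hh' i Hi) (Hh i Hi)).
Qed.

Lemma shadow_open q : opX (shadow q).
Proof.
  intros y Hy; exists (csupp q), (fun i => kval (cfun q i) (cdepth q)).
  split; [intros; apply kval_open | split; [exact Hy | tauto]].
Qed.

Definition common_point (G : PK) : PX :=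
  fun i => proj1_sig (constructive_indefinite_description _ (kval_common_point _ (G i))).

Lemma common_point_spec (G : PK) i n : kval (G i) n (common_point G i).
Proof.
  unfold common_point; destruct (constructive_indefinite_description _ _) as [x Hx]; apply Hx.
Qed.

Lemma shadow_common_point q : shadow q (common_point (cfun q)).
Proof. intros i _; apply common_point_spec. Qed.

Lemma refines_refl q : refines q q.
Proof. split; [|split]; [intros i Hi; exact Hi | lia | apply cyl_refl]. Qed.

Lemma refines_trans q2 q1 q0 : refines q2 q1 -> refines q1 q0 -> refines q2 q0.
Proof.
  intros [Hl2 [HN2 Hc2]] [Hl1 [HN1 Hc1]]; split; [|split].
  - intros i Hi; apply Hl2, Hl1, Hi.
  - lia.
  - intros i Hi; apply (agree_upto_trans _ (kval (cfun q1 i))).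
    + apply (agree_upto_le _ _ _ (cdepth q1)); [exact HN1 | apply Hc2, Hl1, Hi].
    + apply Hc1, Hi.
Qed.

Lemma refines_shadow q' q y : refines q' q -> shadow q' y -> shadow q y.
Proof.
  intros [Hl [HN Hc]] Hy i Hi; apply (Hc i Hi (cdepth q) (le_n _)).
  apply (kval_decr _ _ _ (cdepth q')); [exact HN | apply Hy, Hl, Hi].
Qed.

(* Inside [g|N], push the terms of index > N into the open box: the new terms
   g_i(min k N) /\ V_i still contain y, hence are nonempty. *)
Lemma shrink_into_box q (y : PX) l V :
  shadow q y -> in_box l V y -> open_box l V ->
  exists g, cyl q g /\ forall z, shadow (Cond g l (S (cdepth q))) z -> in_box l V z.
Proof.
  destruct q as [g0 l0 N]; simpl; intros Hy HyV HVo.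
  pose (F := fun i k z => (In i l0 -> kval (g0 i) (Nat.min k N) z) /\ (N < k -> In i l -> V i z)).
  assert (HyF : forall i k, F i k (y i)).
  { intros i k; split.
    - intro Hi; apply (kval_decr _ _ _ N); [lia | apply Hy; exact Hi].
    - intros _ Hi; apply HyV; exact Hi. }
  assert (HF : forall i, krom_seq (X i) (F i)).
  { intro i; split; [|split].
    - intro k; split; [| exists (y i); apply HyF].
      apply open_setI.
      + apply open_imply; intros; apply kval_open.
      + apply open_imply; intro; apply open_imply; intro Hi; apply HVo; exact Hi.
    - intros k z [H1 H2]; split.
      + intro Hi; apply (kval_decr _ _ _ (Nat.min (S k) N)); [lia | apply H1; exact Hi].
      + intros Hk Hi; apply H2; [lia | exact Hi].
    - exists (y i); apply HyF. }
  exists (fun i => exist _ (F i) (HF i)); split.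
  - intros i Hi k Hk z; simpl in Hk; unfold kval; simpl; unfold F.
    replace (Nat.min k N) with k by lia.
    split; [intros [H1 _]; apply H1; exact Hi | intro H; split; [intros _; exact H | intros; lia]].
  - intros z Hz i Hi; apply (proj2 (Hz i Hi)); simpl; [lia | exact Hi].
Qed.

Lemma refine_into_dense (E : PK -> Prop) q (y : PX) l V B :
  opK E -> dense opK E -> shadow q y -> in_box l V y -> open_box l V ->
  exists q2, refines q2 q /\ (forall h, cyl q2 h -> E h) /\ B <= cdepth q2 /\
    (forall z, shadow q2 z -> in_box l V z).
Proof.
  intros HEo HEd Hy HyV HVo.
  destruct (shrink_into_box q y l V Hy HyV HVo) as [g1 [Hg1 Hg1V]].
  pose (q1 := Cond g1 (csupp q ++ l) (S (cdepth q))).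
  destruct (HEd (cyl q1) (cyl_open q1) (ex_intro _ _ (cyl_refl q1))) as [g3 [Hg3 Hg3E]].
  destruct (proj1 (prod_krom_openP E) HEo g3 Hg3E) as [l3 [M HM]].
  pose (N2 := Nat.max (Nat.max (S (cdepth q)) M) B).
  exists (Cond g3 (csupp q ++ l ++ l3) N2); simpl; split; [|split; [|split]].
  - split; [|split]; simpl.
    + intros i Hi; apply in_or_app; left; exact Hi.
    + lia.
    + intros i Hi; apply (agree_upto_trans _ (kval (g1 i))); [|apply Hg1, Hi].
      apply (agree_upto_le _ _ _ (S (cdepth q))); [lia|].
      apply Hg3; simpl; apply in_or_app; left; exact Hi.
  - intros h Hh; apply HM; intros i Hi.
    apply (agree_upto_le _ _ M N2); [lia|].
    apply Hh; simpl; apply in_or_app; right; apply in_or_app; right; exact Hi.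
  - lia.
  - intros z Hz; apply Hg1V; intros i Hi; simpl.
    apply (Hg3 i (in_or_app _ _ _ (or_intror Hi)) (S (cdepth q)) (le_n _)).
    apply (kval_decr _ _ _ N2); [lia|].
    apply Hz; apply in_or_app; right; apply in_or_app; left; exact Hi.
Qed.

Section BaireOfKrom.
Variable D : PX -> Prop.
Hypothesis D_open : opX D.
Hypothesis D_dense : dense opX D.

Definition pullback (g : PK) : Prop := exists l N, forall y, shadow (Cond g l N) y -> D y.

Lemma pullback_open : opK pullback.
Proof.
  apply prod_krom_openP; intros g [l [N Hg]]; exists l, N.
  intros h Hh; exists l, N; intros y Hy; apply Hg; intros i Hi.
  apply (Hh i Hi N (le_n _)), Hy, Hi.
Qed.

Lemma pullback_dense : dense opK pullback.
Proof.
  intros U HU [g0 Hg0].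
  destruct (proj1 (prod_krom_openP U) HU g0 Hg0) as [l [N HN]].
  pose (q := Cond g0 l N).
  destruct (D_dense (shadow q) (shadow_open q) (ex_intro _ _ (shadow_common_point q)))
    as [y [Hy HDy]].
  destruct (D_open y HDy) as [l1 [V [HVo [HyV HVD]]]].
  destruct (shrink_into_box q y l1 V Hy HyV HVo) as [g1 [Hg1 Hg1V]].
  exists g1; split; [apply HN; exact Hg1|].
  exists l1, (S N); intros z Hz; apply HVD, Hg1V, Hz.
Qed.

End BaireOfKrom.

Lemma baire_prod_of_baire_krom : baire PK opK -> baire PX opX.
Proof.
  intros HK D HD U HU [x0 Hx0].
  destruct (HU x0 Hx0) as [l [V [HVo [Hx0V HVU]]]].
  pose (q := Cond (fun i => krom_top (x0 i)) nil 0).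
  destruct (shrink_into_box q x0 l V (fun i Hi => match Hi with end) Hx0V HVo)
    as [g1 [_ Hg1V]].
  pose (q1 := Cond g1 l 1).
  assert (Hpull : forall n, opK (pullback (D n)) /\ dense opK (pullback (D n))).
  { intro n; split; [apply pullback_open | exact (pullback_dense _ (proj1 (HD n)) (proj2 (HD n)))]. }
  destruct (HK (fun n => pullback (D n)) Hpull (cyl q1) (cyl_open q1) (ex_intro _ _ (cyl_refl q1)))
    as [G [HG HGD]].
  exists (common_point G); split.
  - apply HVU, Hg1V; intros i Hi; apply (HG i Hi 1 (le_n _)), common_point_spec.
  - intro n; destruct (HGD n) as [l' [m Hm]]; apply Hm; intros i _; apply common_point_spec.
Qed.

Section Levels.
Variable E : nat -> PK -> Prop.
Variable q0 : cond.

Definition candidate (n : nat) (L : cond -> Prop) (q : cond) : Prop :=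
  (forall h, cyl q h -> E n h) /\ S n <= cdepth q /\ exists p, L p /\ refines q p.

Fixpoint level (n : nat) : cond -> Prop :=
  match n with
  | 0 => eq q0
  | S m => proj1_sig (classical_sets.ex_maximal_disjoint_subcollection
                        shadow (candidate m (level m)))
  end.

Lemma level_maximal n :
  classical_sets.maximal_disjoint_subcollection shadow (level (S n)) (candidate n (level n)).
Proof. exact (proj2_sig (classical_sets.ex_maximal_disjoint_subcollection _ _)). Qed.

Lemma level_candidate n q : level (S n) q -> candidate n (level n) q.
Proof. destruct (level_maximal n) as [Hsub _ _]; apply Hsub. Qed.

Lemma level_depth n q : level n q -> n <= cdepth q.
Proof. destruct n; [lia | intro Hq; apply (level_candidate n q Hq)]. Qed.

Lemma level_disjoint n q q' :
  level n q -> level n q' -> (exists y, shadow q y /\ shadow q' y) -> q = q'.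
Proof.
  destruct n as [|n]; [intros <- <-; reflexivity|].
  destruct (level_maximal n) as [_ Htriv _]; intros Hq Hq' [y Hy].
  exact (Htriv q q' Hq Hq' (ex_intro _ y Hy)).
Qed.

Definition outside (y : PX) : Prop :=
  exists l V, open_box l V /\ in_box l V y /\ forall z, in_box l V z -> ~ shadow q0 z.

Definition level_set (n : nat) (y : PX) : Prop :=
  (exists q, level n q /\ shadow q y) \/ outside y.

Lemma level_set_open n : opX (level_set n).
Proof.
  intros y [[q [Hq Hy]] | [l [V [HVo [HyV Hout]]]]].
  - destruct (shadow_open q y Hy) as [l [V [HVo [HyV HVq]]]].
    exists l, V; split; [exact HVo | split; [exact HyV|]].
    intros z Hz; left; exists q; split; [exact Hq | apply HVq, Hz].
  - exists l, V; split; [exact HVo | split; [exact HyV|]].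
    intros z Hz; right; exists l, V; auto.
Qed.

Hypothesis E_open_dense : forall n, opK (E n) /\ dense opK (E n).

Lemma level_set_dense n : dense opX (level_set n).
Proof.
  induction n as [|n IH]; intros U HU [x0 Hx0].
  - destruct (classic (exists z, U z /\ shadow q0 z)) as [[z [HzU Hz]] | Hno].
    + exists z; split; [exact HzU | left; exists q0; split; [reflexivity | exact Hz]].
    + exists x0; split; [exact Hx0 | right].
      destruct (HU x0 Hx0) as [l [V [HVo [Hx0V HVU]]]].
      exists l, V; split; [exact HVo | split; [exact Hx0V|]].
      intros z HzV Hz; apply Hno; exists z; split; [apply HVU, HzV | exact Hz].
  - destruct (IH U HU (ex_intro _ x0 Hx0)) as [y [HyU [[p [Hp Hpy]] | Hout]]];
      [| exists y; split; [exact HyU | right; exact Hout]].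
    destruct (HU y HyU) as [l [V [HVo [HyV HVU]]]].
    destruct (refine_into_dense (E n) p y l V (S n)
                (proj1 (E_open_dense n)) (proj2 (E_open_dense n)) Hpy HyV HVo)
      as [q [Hqp [HqE [Hdepth HqV]]]].
    destruct (maximal_disjoint_meets shadow _ _ (level_maximal n) q
                (conj HqE (conj Hdepth (ex_intro _ p (conj Hp Hqp))))
                (ex_intro _ _ (shadow_common_point q)))
      as [q' [Hq' [z [Hzq Hzq']]]].
    exists z; split; [apply HVU, HqV, Hzq | left; exists q'; split; assumption].
Qed.

(* Disjointness of shadows within a level makes the predecessor of a
   branch element unique, which is what links consecutive levels. *)
Lemma level_branch (x : PX) :
  (forall n, exists q, level n q /\ shadow q x) ->
  exists qs : nat -> cond, (forall n, level n (qs n) /\ shadow (qs n) x) /\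
                           (forall n, refines (qs (S n)) (qs n)).
Proof.
  intro Hx.
  pose (qs := fun n => proj1_sig (constructive_indefinite_description _ (Hx n))).
  assert (Hqs : forall n, level n (qs n) /\ shadow (qs n) x).
  { intro n; unfold qs; destruct (constructive_indefinite_description _ _) as [q Hq]; exact Hq. }
  exists qs; split; [exact Hqs|]; intro n.
  destruct (Hqs (S n)) as [HS HSx].
  destruct (level_candidate n _ HS) as [_ [_ [p [Hp Hrp]]]].
  replace (qs n) with p; [exact Hrp|].
  apply (level_disjoint n); [exact Hp | apply Hqs |].
  exists x; split; [exact (refines_shadow _ _ _ Hrp HSx) | apply Hqs].
Qed.

End Levels.

Section Branch.
Variable qs : nat -> cond.
Variable x : PX.
Hypothesis branch_depth : forall n, n <= cdepth (qs n).
Hypothesis branch_step : forall n, refines (qs (S n)) (qs n).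
Hypothesis branch_shadow : forall n, shadow (qs n) x.

Lemma refines_chain a m : a <= m -> refines (qs m) (qs a).
Proof.
  induction 1 as [|m _ IH]; [apply refines_refl|].
  exact (refines_trans _ _ _ (branch_step m) IH).
Qed.

Lemma branch_limit_at i : exists Gi : Krom (X i), forall n, In i (csupp (qs n)) ->
  agree_upto (kval Gi) (kval (cfun (qs n) i)) (cdepth (qs n)).
Proof.
  destruct (classic (exists n0, In i (csupp (qs n0)))) as [[n0 Hn0] | Hno];
    [| exists (cfun (qs 0) i); intros n Hn; exfalso; apply Hno; exists n; exact Hn].
  assert (Hin : forall n, In i (csupp (qs (n + n0)))).
  { intro n; apply (proj1 (refines_chain n0 (n + n0) ltac:(lia))), Hn0. }
  destruct (krom_limit (X i) (fun n => cfun (qs (n + n0)) i) (fun n => cdepth (qs (n + n0)))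
              (x i)) as [Gi HGi].
  - intro n; specialize (branch_depth (n + n0)); lia.
  - intros n m Hnm; apply (proj2 (proj2 (refines_chain (n + n0) (m + n0) ltac:(lia)))), Hin.
  - intro n; apply branch_shadow, Hin.
  - exists Gi; intros n Hn.
    destruct (refines_chain n (n + n0) ltac:(lia)) as [_ [Hle Hc]].
    apply (agree_upto_trans _ (kval (cfun (qs (n + n0)) i))); [|exact (Hc i Hn)].
    exact (agree_upto_le _ _ _ _ Hle (HGi n)).
Qed.

Lemma branch_limit : exists G : PK, forall n, cyl (qs n) G.
Proof.
  exists (fun i => proj1_sig (constructive_indefinite_description _ (branch_limit_at i))).
  intros n i Hi; destruct (constructive_indefinite_description _ _) as [Gi HGi]; exact (HGi n Hi).
Qed.

End Branch.

Lemma baire_krom_of_baire_prod : baire PX opX -> baire PK opK.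
Proof.
  intros HX E HE W HW [g HgW].
  destruct (proj1 (prod_krom_openP W) HW g HgW) as [l [N HWcyl]].
  pose (q0 := Cond g l N).
  destruct (HX (level_set E q0) (fun n => conj (level_set_open E q0 n) (level_set_dense E q0 HE n))
              (shadow q0) (shadow_open q0) (ex_intro _ _ (shadow_common_point q0)))
    as [x [Hx0 Hx]].
  assert (Hthread : forall n, exists q, level E q0 n q /\ shadow q x).
  { intro n; destruct (Hx n) as [H | [l' [V [_ [HxV Hout]]]]]; [exact H|].
    exfalso; exact (Hout x HxV Hx0). }
  destruct (level_branch E q0 x Hthread) as [qs [Hqs Hstep]].
  destruct (branch_limit qs x (fun n => level_depth E q0 n _ (proj1 (Hqs n))) Hstep
              (fun n => proj2 (Hqs n))) as [G HG].
  exists G; split.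
  - apply HWcyl; replace (Cond g l N) with (qs 0); [apply HG | symmetry; exact (proj1 (Hqs 0))].
  - intro n; apply (level_candidate E q0 n (qs (S n)) (proj1 (Hqs (S n)))), HG.
Qed.

End KromProduct.

Theorem theorem4p1 (I : Type) (X : I -> TopSpace) :
  baire (forall i, X i) (prod_open (fun i => carrier (X i)) (fun i => is_open (X i)))
  <->
  baire (forall i, Krom (X i)) (prod_open (fun i => Krom (X i)) (fun i => krom_open (X i))).
Proof.
  split; [apply baire_krom_of_baire_prod | apply baire_prod_of_baire_krom].
Qed.
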